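(* Consider the online energy harvesting two-hop status update system described in the context, with service times $d>0$ and $\bar d>0$. Under any feasible policy, the number $N(T)$ of updates received by the destination within time $T$ satisfies $$\limsup_{T\to\infty}\frac{N(T)}{T}\le \min\left\{1,\frac{1}{d+\bar d}\right\}\quad\text{almost surely}.$$
   Context: A source sends status updates to a destination through a half-duplex relay. Energy arrives at the source and at the relay according to two independent Poisson processes of unit rate. Each node has an infinite battery, and at time $0$ each battery holds exactly one energy packet. Transmitting one update consumes one energy packet at the transmitting node, and a node may transmit only if its battery holds at least one packet just before the transmission time (energy causality). An update transmitted by the source at time $t_i$ reaches the relay at time $t_i+d$. The relay forwards it at a time $\bar t_i\ge t_i+d$, and it reaches the destination at time $\bar t_i+\bar d$. The source may transmit the next update only at a time $t_{i+1}\ge\bar t_i+\bar d$. A feasible policy is any choice of such transmission times satisfying these constraints. $N(T)$ is the number of indices $i$ with $\bar t_i+\bar d\le T$. *)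

From HB Require Import structures.
From mathcomp Require Import all_boot all_order all_algebra.
From mathcomp Require Import all_classical all_reals all_analysis.
Set Implicit Arguments. Unset Strict Implicit. Unset Printing Implicit Defensive.
Import Order.TTheory GRing.Theory Num.Theory.
Import numFieldNormedType.Exports.
Local Open Scope classical_set_scope.
Local Open Scope ring_scope.

Definition mutually_independent (R : realType) (d : measure_display)
  (T : measurableType d) (P : probability T R) (I : eqType)
  (X : I -> {RV P >-> R}) : Prop :=
  forall (J : seq I) (B : I -> set R), uniq J ->
    (forall i, measurable (B i)) ->
    P (\bigcap_(i in [set` J]) (X i @^-1` B i)) =
      (\prod_(i <- J) P (X i @^-1` B i))%E.

(* Time of the k-th energy arrival (k >= 1) of a renewal process with
   inter-arrival times X 0, X 1, ... *)
Definition arrival (R : realType) (X : nat -> R) (k : nat) : R :=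
  \sum_(j < k) X j.

Definition harvested_before (R : realType) (X : nat -> R) (t : R) (n : nat) :=
  forall k, (1 <= k <= n)%N -> arrival X k < t.

(* A transmission schedule: nupd = None means infinitely many updates,
   Some m means updates 0..m-1; src i = t_i, rly i = \bar t_i. *)
Record schedule (R : realType) := Schedule {
  nupd : option nat;
  src : nat -> R;
  rly : nat -> R }.

Definition valid (R : realType) (s : schedule R) (i : nat) : bool :=
  if nupd s is Some m then (i < m)%N else true.

(* Feasibility given energy inter-arrival times X (source) and Y (relay),
   each node having one packet in its battery at time 0: the i-th
   transmission (0-indexed) of a node requires at least i harvested packets
   strictly before it (battery just before = 1 + harvested - i >= 1). *)
Definition feasible (R : realType) (X Y : nat -> R) (d db : R)
  (s : schedule R) : Prop :=
  forall i, valid s i ->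
    [/\ 0 <= src s i,
        src s i + d <= rly s i,
        (valid s i.+1 -> rly s i + db <= src s i.+1),
        harvested_before X (src s i) i
      & harvested_before Y (rly s i) i].

Definition Nrecv (R : realType) (s : schedule R) (db T : R) : \bar R :=
  ereal_sup [set ((size l)%:R)%:E | l in
    [set l : seq nat | uniq l /\
       forall i, i \in l -> valid s i /\ rly s i + db <= T]].

Arguments mutually_independent {R d T} P {I} X.

From HB Require Import structures.
From mathcomp Require Import all_boot all_order all_algebra.
From mathcomp Require Import all_classical all_reals all_analysis.
From mathcomp Require Import ring lra.
Import Order.TTheory GRing.Theory Num.Theory.
Import numFieldNormedType.Exports.
Local Open Scope classical_set_scope.
Local Open Scope ring_scope.
Set Implicit Arguments. Unset Strict Implicit. Unset Printing Implicit Defensive.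

(* Relay transmission i cannot happen before i (d + db) + d, so N(T) <= T / (d + db).
   Update i can moreover be delivered by time T only if the i-th energy packet of the
   source arrived before T; almost surely the source arrival times eventually exceed
   (1 - dl) n for every dl > 0, whence N(T) <= T / (1 - dl) + O(1) and the rate is at
   most 1.
   The linear growth of the arrival times needs no law of large numbers: X_j is at
   least h #{k < K | (k+1) h < X_j}; for each level k these indicators are independent
   Bernoulli(e^{-(k+1) h}) variables, so by a Chernoff bound and Borel-Cantelli their
   empirical frequency is eventually at least e^{-(k+1) h} - 1/K; and
   h sum_k e^{-(k+1) h} is a Riemann sum for the integral of e^{-x} over [0, oo),
   which is 1. *)

Section chernoff.
Context {R : realType}.

Definition num_true n (f : {ffun 'I_n -> bool}) : R := \sum_(k < n) (f k : nat)%:R.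

Definition bernoulli_weight (q : R) n (f : {ffun 'I_n -> bool}) : R :=
  \prod_(k < n) (if f k then q else 1 - q).

Lemma bernoulli_weight_ge0 (q : R) n (f : {ffun 'I_n -> bool}) :
  0 <= q <= 1 -> 0 <= bernoulli_weight q f.
Proof. by move=> /andP[q0 q1]; apply: prodr_ge0 => k _; case: (f k); lra. Qed.

(* Chernoff: the indicator of [num_true f < a n] is at most
   [expR (s (a n - num_true f))], and the weighted sum of the latter over all
   patterns factorizes. *)
Lemma sum_bernoulli_weight_lt_le n (q a s : R) : 0 <= q <= 1 -> 0 <= s ->
  \sum_(f : {ffun 'I_n -> bool} | num_true f < a * n%:R) bernoulli_weight q f
  <= (expR (s * a) * (q * expR (- s) + (1 - q))) ^+ n.
Proof.
move=> q01 s0.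
set w := fun b : bool => if b then q else 1 - q.
apply: (@le_trans _ _ (\sum_(f : {ffun 'I_n -> bool})
    bernoulli_weight q f * expR (s * (a * n%:R - num_true f)))).
  rewrite [leRHS](bigID (fun f : {ffun 'I_n -> bool} => num_true f < a * n%:R)) /=.
  rewrite -[leLHS]addr0; apply: lerD; last first.
    by apply: sumr_ge0 => f _; rewrite mulr_ge0 ?bernoulli_weight_ge0 ?expR_ge0.
  apply: ler_sum => f lt_fa; rewrite -[leLHS]mulr1 ler_wpM2l ?bernoulli_weight_ge0 //.
  by rewrite -[leLHS]expR0 ler_expR mulr_ge0 // subr_ge0 ltW.
have -> : \sum_(f : {ffun 'I_n -> bool})
    bernoulli_weight q f * expR (s * (a * n%:R - num_true f))
  = expR (s * a) ^+ n * \sum_(f : {ffun 'I_n -> bool})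
      \prod_(k < n) (w (f k) * expR (- s * (f k : nat)%:R)).
  rewrite mulr_sumr; apply: eq_bigr => f _.
  rewrite big_split /= /num_true mulrBr expRD -mulNr mulr_sumr expR_sum.
  by rewrite (mulrA s a) expRM_natr mulrCA.
rewrite exprMn ler_wpM2l ?exprn_ge0 ?expR_ge0 //.
rewrite -(bigA_distr_bigA (fun (k : 'I_n) (b : bool) => w b * expR (- s * (b : nat)%:R))).
by rewrite big_bool /= prodr_const card_ord /w mulr1 mulr0 expR0 mulr1.
Qed.

Lemma chernoff_factor_le (q dl : R) : 0 <= q <= 1 -> 0 < dl ->
  expR (dl / 2 * (q - dl)) * (q * expR (- (dl / 2)) + (1 - q))
  <= expR (- (dl ^+ 2 / 4)).
Proof.
move=> /andP[q0 q1] dl0; set s := dl / 2; set E := expR (- s).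
have s0 : 0 <= s by rewrite /s; lra.
have E_ge : 1 - s <= E by have := expR_ge1Dx (- s); rewrite /E; lra.
have E_le : E * (1 + s) <= 1.
  have E_expR : E * expR s = 1 by rewrite /E -expRD addNr expR0.
  by rewrite -[leRHS]E_expR ler_wpM2l ?expR_ge0 ?expR_ge1Dx.
have qE_le : q * E + (1 - q) <= expR (- (q * (1 - E))).
  by have := expR_ge1Dx (- (q * (1 - E))); lra.
apply: (@le_trans _ _ (expR (s * (q - dl)) * expR (- (q * (1 - E))))).
  by rewrite ler_wpM2l ?expR_ge0.
rewrite -expRD ler_expR.
have E_gap : 1 - E >= s * (1 - s) by nra.
have qE_gap : q * (1 - E) >= q * s * (1 - s) by nra.
have qss_le : q * s * s <= s * s by nra.
rewrite /s in qE_gap qss_le *; nra.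
Qed.

Lemma bernoulli_lower_tail_le n (q dl : R) : 0 <= q <= 1 -> 0 < dl ->
  \sum_(f : {ffun 'I_n -> bool} | num_true f < (q - dl) * n%:R)
    bernoulli_weight q f <= expR (- (dl ^+ 2 / 4)) ^+ n.
Proof.
move=> q01 dl0; have s0 : 0 <= dl / 2 by rewrite divr_ge0 ?ltW.
apply: le_trans (sum_bernoulli_weight_lt_le n (q - dl) q01 s0) _.
rewrite lerXn2r ?nnegrE ?expR_ge0 ?chernoff_factor_le //.
by case/andP: q01 => q0 q1; rewrite mulr_ge0 ?expR_ge0 // addr_ge0 ?mulr_ge0 ?expR_ge0 ?subr_ge0.
Qed.

End chernoff.

Lemma measure_bigsetU_le d (T : measurableType d) (R : realType)
    (mu : {measure set T -> \bar R}) (I : Type) (r : seq I) (Pr : pred I)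
    (F : I -> set T) : (forall i, measurable (F i)) ->
  (mu (\big[setU/set0]_(i <- r | Pr i) F i) <= \sum_(i <- r | Pr i) mu (F i))%E.
Proof.
move=> mF.
suff [] : measurable (\big[setU/set0]_(i <- r | Pr i) F i) /\
  (mu (\big[setU/set0]_(i <- r | Pr i) F i) <= \sum_(i <- r | Pr i) mu (F i))%E by [].
elim/big_rec2 : _ => [|i A s _ [mA le_As]]; first by rewrite measure0.
split; first exact: measurableU.
by apply: le_trans (measureU2 _ _ _) _ => //; exact: leeD.
Qed.

Definition pattern (T : Type) (E : nat -> T -> bool) n (f : {ffun 'I_n -> bool})
  : set T := [set w | forall k : 'I_n, E k w = f k].

Section bernoulli_frequency.
Context {R : realType} {dm : measure_display} {Omega : measurableType dm}
  (P : probability Omega R) (E : nat -> Omega -> bool) (q : R).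
Hypothesis q01 : 0 <= q <= 1.
Hypothesis pattern_prob : forall n (f : {ffun 'I_n -> bool}),
  measurable (pattern E f) /\ P (pattern E f) = (bernoulli_weight q f)%:E.

(* Borel-Cantelli: the events [num_true < (q - dl) n] have summable,
   geometrically decaying probabilities. *)
Lemma ae_eventually_frequency_ge dl : 0 < dl ->
  {ae P, forall w, \forall n \near \oo,
     (q - dl) * n%:R <= \sum_(j < n) (E j w : nat)%:R}.
Proof.
move=> dl0.
pose F n := \big[setU/set0]_(f : {ffun 'I_n -> bool} | num_true f < (q - dl) * n%:R)
  pattern E f.
have mF n : measurable (F n).
  by apply: bigsetU_measurable => f _; case: (pattern_prob f).
set rho : R := expR (- (dl ^+ 2 / 4)).
have rho_gt0 : 0 < rho := expR_gt0 _.
have rho_lt1 : rho < 1.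
  by rewrite -[ltRHS]expR0 ltr_expR oppr_lt0 divr_gt0 ?exprn_gt0.
have PF n : (P (F n) <= (rho ^+ n)%:E)%E.
  apply: le_trans (measure_bigsetU_le _ _ _ _) _ => [f|]; first by case: (pattern_prob f).
  rewrite (eq_bigr _ (fun f _ => (pattern_prob f).2)) sumEFin lee_fin.
  exact: bernoulli_lower_tail_le.
have P_limsup : P (lim_sup_set F) = 0%E.
  apply: lim_sup_set_cvg0 => //; apply: le_lt_trans (ltry (1 - rho)^-1).
  apply: lime_le; first by apply: is_cvg_nneseries => n _ _.
  apply: nearW => n; apply: (@le_trans _ _ (\sum_(0 <= i < n) (rho ^+ i)%:E)%E).
    by apply: lee_sum => i _; exact: PF.
  rewrite sumEFin lee_fin exprn_geometric -div1r.
  by apply: geometric_le_lim => //; rewrite ger0_norm // ltW.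
exists (lim_sup_set F); split => //.
  by apply: bigcapT_measurable => k; apply: bigcup_measurable => j _.
move=> w /= not_ev n _.
have /existsNP[j /not_implyP[le_nj /negP]] :
    ~ (forall j, (n <= j)%N -> (q - dl) * j%:R <= \sum_(k < j) (E k w : nat)%:R).
  by move=> ev; apply: not_ev; exists n.
rewrite -ltNge => lt_j; exists j => //.
rewrite /F -bigcup_seq_cond; exists [ffun k : 'I_j => E k w].
  by rewrite /= mem_index_enum /num_true; under eq_bigr do rewrite ffunE.
by move=> k; rewrite ffunE.
Qed.

End bernoulli_frequency.

Section exponential_tail.
Context {R : realType} (rate : R).
Hypothesis rate_gt0 : 0 < rate.
Local Open Scope ereal_scope.

Lemma exponential_prob_itvNy0 : exponential_prob rate [set` `]-oo, 0[%R] = 0.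
Proof.
rewrite /exponential_prob integral0_eq // => x /=; rewrite in_itv /= => x_lt0.
by rewrite lt0_exponential_pdf.
Qed.

Lemma exponential_prob_itvcy (c : R) : (0 < c)%R ->
  exponential_prob rate [set` `]c, +oo[%R] = (expR (- rate * c))%:E.
Proof.
move=> c_gt0.
rewrite -setCitvl probability_setC; last exact: measurable_itv.
rewrite (@itv_bndbnd_setU _ _ _ (BLeft 0%R)) //; last by rewrite bnd_simp ltW.
set mu := (X in 1 - X _ = _).
set neg := (X in mu (X `|` _)); set bnd := (X in mu (_ `|` X)).
have -> : mu (neg `|` bnd) = mu neg + mu bnd.
  apply: measureU; try exact: measurable_itv.
  apply/seteqP; split => x //=; rewrite /neg /bnd /= !in_itv /= => -[x_lt0 /andP[x_ge0 _]].
  by move: x_lt0; rewrite ltNge x_ge0.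
have -> : mu neg = 0 by exact: exponential_prob_itvNy0.
have -> : mu bnd = 1 - (expR (- rate * c))%:E by exact: exponential_prob_itv0c.
by rewrite add0e oppeB // addeA subee // add0e.
Qed.

End exponential_tail.

Section independent_family.
Context {R : realType} {dm : measure_display} {Omega : measurableType dm}
  (P : probability Omega R).

Lemma mutually_independent_comp (I J : eqType) (X : I -> {RV P >-> R})
    (g : J -> I) : injective g ->
  mutually_independent P X -> mutually_independent P (X \o g).
Proof.
move=> g_inj indX Js B uJs mB.
pose B' i := [set x | exists2 j, g j = i & B j x].
have B'g j : B' (g j) = B j.
  by apply/seteqP; split => x; [case=> j' /g_inj -> | exists j].
have mB' i : measurable (B' i).
  have [[j <-]|no_j] := pselect (exists j, g j = i); first by rewrite B'g.
  rewrite (_ : B' i = set0) //; apply/seteqP; split => x //.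
  by case=> j gj; exfalso; apply: no_j; exists j.
have := indX (map g Js) B' _ mB'; rewrite map_inj_uniq // => /(_ uJs).
rewrite big_map; under eq_bigr do rewrite B'g; move=> <-.
congr (P _); apply/seteqP; split => w /= H.
- by move=> i /mapP[j jJs ->]; rewrite B'g; exact: H.
- by move=> j jJs; rewrite -B'g; apply: H; exact: map_f.
Qed.

Variables (X : nat -> {RV P >-> R}) (rate : R).
Hypotheses (rate_gt0 : 0 < rate)
  (X_exp : forall n, distribution P (X n) = exponential_prob rate)
  (indX : mutually_independent P X).

Lemma measurable_preimage_RV n (A : set R) :
  measurable A -> measurable (X n @^-1` A).
Proof. by move=> mA; rewrite -[X n @^-1` A]setTI; exact: measurable_funP. Qed.

Lemma prob_preimage_RV n (A : set R) : measurable A ->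
  P (X n @^-1` A) = exponential_prob rate A.
Proof. by move=> mA; rewrite -(X_exp n). Qed.

Lemma exponential_pattern_prob (c : R) : 0 < c -> forall n (f : {ffun 'I_n -> bool}),
  measurable (pattern (fun k w => c < X k w) f) /\
  P (pattern (fun k w => c < X k w) f) = (bernoulli_weight (expR (- rate * c)) f)%:E.
Proof.
move=> c_gt0 n f.
set A := [set` `]c, +oo[%R] : set R.
have mA : measurable A by exact: measurable_itv.
pose B j := if (insub j : option 'I_n) is Some k then (if f k then A else ~` A) else setT.
have Bk (k : 'I_n) : B k = if f k then A else ~` A by rewrite /B valK.
have mB j : measurable (B j).
  by rewrite /B; case: insub => [k|] //; case: (f k) => //; exact: measurableC.
have pattern_cap : \bigcap_(j in [set` index_iota 0 n]) (X j @^-1` B j) =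
    pattern (fun k w => c < X k w) f.
  apply/seteqP; split => w /= H.
  - move=> k; have := H k; rewrite /= mem_index_iota ltn_ord Bk => /(_ isT).
    case: (f k); rewrite /A /= in_itv /= andbT; first by move=> ->.
    by move=> /negP/negbTE.
  - move=> j; rewrite /= mem_index_iota /= => lt_jn.
    rewrite -[j]/(val (Ordinal lt_jn)) Bk; move: (H (Ordinal lt_jn)).
    by case: (f _) => /= Hc; rewrite /A /= in_itv /= andbT Hc.
rewrite -pattern_cap; split.
  by apply: (fin_bigcap_measurable (finite_seq _)) => j _; exact: measurable_preimage_RV.
rewrite indX ?iota_uniq // big_mkord.
rewrite /bernoulli_weight -prodEFin; apply: eq_bigr => k _; rewrite Bk.
case: (f k); first by rewrite prob_preimage_RV // exponential_prob_itvcy.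
rewrite -preimage_setC probability_setC; last exact: measurable_preimage_RV.
by rewrite prob_preimage_RV // exponential_prob_itvcy // EFinB.
Qed.

End independent_family.

Section level_sums.
Context {R : realType}.

Lemma level_count_le (h x : R) K : 0 < h -> 0 <= x ->
  h * \sum_(k < K) (nat_of_bool (k.+1%:R * h < x))%:R <= x.
Proof.
move=> h_gt0; elim: K x => [|K IH] x x_ge0; first by rewrite big_ord0 mulr0.
rewrite big_ord_recl /=.
have shift (k : 'I_K) : ((bump 0 k).+1%:R * h < x) = (k.+1%:R * h < x - h).
  by rewrite /bump /= add1n -[k.+2]addn1 natrD mulrDl mul1r ltrBrDr.
under eq_bigr do rewrite shift.
have [lt_hx|le_xh] := ltP h x.
  rewrite mul1r lt_hx /= mulrDr mulr1.
  by have := IH (x - h); rewrite subr_ge0 => /(_ (ltW lt_hx)); lra.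
rewrite mul1r ltNge le_xh /= add0r big1 ?mulr0 // => k _.
suff -> : (k.+1%:R * h < x - h) = false by [].
apply/negbTE; rewrite -leNgt (@le_trans _ _ 0) //; first lra.
by rewrite mulr_ge0 // ltW.
Qed.

Lemma expRN_le_inv (x : R) : 0 < x -> expR (- x) <= x^-1.
Proof.
move=> x_gt0; rewrite expRN lef_pV2 ?posrE ?expR_gt0 //.
by have := expR_ge1Dx x; lra.
Qed.

Lemma expN_riemann_sum_ge (h : R) K : 0 < h ->
  1 - h - expR (- h) ^+ K <= h * \sum_(k < K) expR (- h) ^+ k.+1.
Proof.
move=> h_gt0; set r := expR (- h).
have r_gt0 : 0 < r := expR_gt0 _.
have r_ge : 1 - h <= r by have := expR_ge1Dx (- h); rewrite /r; lra.
have r_le1 : r <= 1 by rewrite /r -[leRHS]expR0 ler_expR; lra.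
have telescope : (1 - r) * \sum_(k < K) r ^+ k.+1 = r - r ^+ K.+1.
  elim: K => [|K IH]; first by rewrite big_ord0 mulr0 expr1 subrr.
  by rewrite big_ord_recr /= mulrDr IH !exprS; ring.
have sum_ge0 : 0 <= \sum_(k < K) r ^+ k.+1.
  by apply: sumr_ge0 => k _; exact: exprn_ge0 (ltW r_gt0).
have rK_ge0 : 0 <= r ^+ K := exprn_ge0 K (ltW r_gt0).
have rK_le1 : r ^+ K <= 1 by rewrite exprn_ile1 // ltW.
have : (1 - r) * \sum_(k < K) r ^+ k.+1 <= h * \sum_(k < K) r ^+ k.+1.
  by rewrite ler_wpM2r //; lra.
rewrite telescope exprS; nra.
Qed.

Lemma riemann_levels_ge (dl : R) K : 0 < dl -> 16 <= K%:R * dl ^+ 2 ->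
  1 - dl <= dl / 4 * \sum_(k < K) (expR (- (dl / 4)) ^+ k.+1 - K%:R^-1).
Proof.
move=> dl_gt0 K_ge; set h := dl / 4.
have h_gt0 : 0 < h by rewrite divr_gt0.
have K_gt0 : 0 < K%:R :> R.
  by rewrite -(@pmulr_lgt0 _ (dl ^+ 2)) ?exprn_gt0 //; lra.
have tail : expR (- h) ^+ K <= h.
  rewrite -expRM_natl mulrN; apply: le_trans (expRN_le_inv (mulr_gt0 K_gt0 h_gt0)) _.
  rewrite -div1r ler_pdivrMr ?mulr_gt0 // /h; rewrite expr2 in K_ge; nra.
have := expN_riemann_sum_ge K h_gt0.
rewrite big_split /= sumrN sumr_const card_ord -[_ *+ K]mulr_natl mulfV ?gt_eqF // mulrBr mulr1.
by rewrite /h in tail *; lra.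
Qed.

End level_sums.

Section exponential_arrivals.
Context {R : realType} {dm : measure_display} {Omega : measurableType dm}
  (P : probability Omega R) (X : nat -> {RV P >-> R}).
Hypotheses (X_exp : forall n, distribution P (X n) = exponential_prob (1 : R))
  (indX : mutually_independent P X).

Lemma ae_eventually_arrival_ge (dl : R) : 0 < dl ->
  {ae P, forall w, \forall n \near \oo, (1 - dl) * n%:R <= arrival (X ^~ w) n}.
Proof.
move=> dl_gt0; set h := dl / 4.
have h_gt0 : 0 < h by rewrite divr_gt0.
pose K := (Num.truncn (16 / dl ^+ 2)).+1.
have K_ge : 16 <= K%:R * dl ^+ 2.
  by have := truncnS_gt (16 / dl ^+ 2); rewrite ltr_pdivrMr ?exprn_gt0 // => /ltW.
have K_gt0 : 0 < K%:R :> R by [].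
have level (k : 'I_K) : {ae P, forall w, \forall n \near \oo,
    (expR (- h) ^+ k.+1 - K%:R^-1) * n%:R
      <= \sum_(j < n) (nat_of_bool (k.+1%:R * h < X j w))%:R}.
  have c_gt0 : 0 < k.+1%:R * h by rewrite mulr_gt0.
  have -> : expR (- h) ^+ k.+1 = expR (- 1 * (k.+1%:R * h)).
    by rewrite mulN1r -expRM_natl mulrN.
  apply: (ae_eventually_frequency_ge (E := fun j w => k.+1%:R * h < X j w)).
  - by rewrite expR_ge0 /= -[leRHS]expR0 ler_expR mulN1r oppr_le0 ltW.
  - exact: exponential_pattern_prob.
  - by rewrite invr_gt0.
have X_ge0 : {ae P, forall w j, 0 <= X j w}.
  apply: ae_foralln => j; exists (X j @^-1` [set` `]-oo, 0[%R]); split.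
  - exact: measurable_preimage_RV (measurable_itv _).
  - exact: etrans (prob_preimage_RV X_exp j (measurable_itv _))
      (exponential_prob_itvNy0 _).
  - by move=> w /= /negP; rewrite -ltNge in_itv /=.
move: (filter_forall (ae_filter_ringOfSetsType P) level) X_ge0.
apply: filterS2 => w /filter_forall levels X_ge0_w.
apply: filterS levels => n levels_n.
apply: (@le_trans _ _ (h * \sum_(k < K) \sum_(j < n)
    (nat_of_bool (k.+1%:R * h < X j w))%:R)); last first.
  rewrite exchange_big mulr_sumr; apply: ler_sum => j _; exact: level_count_le.
apply: (@le_trans _ _ (h * \sum_(k < K) (expR (- h) ^+ k.+1 - K%:R^-1) * n%:R)).
  by rewrite -mulr_suml mulrA ler_wpM2r // riemann_levels_ge.
apply: ler_wpM2l; first exact: ltW.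
by apply: ler_sum => k _; exact: levels_n.
Qed.

Lemma ae_arrival_rate_ge : {ae P, forall w (dl : R), 0 < dl ->
  \forall n \near \oo, (1 - dl) * n%:R <= arrival (X ^~ w) n}.
Proof.
have inv_gt0 (m : nat) : 0 < m.+1%:R^-1 :> R by rewrite invr_gt0.
have rates m := ae_eventually_arrival_ge (inv_gt0 m).
apply: filterS (ae_foralln rates) => w rates_w dl dl_gt0.
have lt_m : dl^-1 < (Num.truncn dl^-1).+1%:R := truncnS_gt _.
apply: filterS (rates_w (Num.truncn dl^-1)) => n; apply: le_trans.
rewrite ler_wpM2r // lerD2l lerN2 -[leRHS]invrK lef_pV2 ?posrE ?invr_gt0 //.
exact: ltW.
Qed.

End exponential_arrivals.

Lemma limf_esup_le_near (T : choiceType) (X : filteredType T) (R : realType)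
    (F : set_system X) (f : X -> \bar R) (l : \bar R) :
  (\forall x \near F, (f x <= l)%E) -> (limf_esup f F <= l)%E.
Proof.
move=> Fl; rewrite limf_esupE; apply: le_trans (ereal_inf_lbound _) _.
  by exists [set x | (f x <= l)%E].
by apply: ge_ereal_sup => _ [x fxl <-].
Qed.

Section schedule_bounds.
Context {R : realType}.
Variables (x y : nat -> R) (d db : R) (s : schedule R).
Hypotheses (d_gt0 : 0 < d) (db_gt0 : 0 < db) (feas : feasible x y d db s).

Lemma valid_pred i : valid s i.+1 -> valid s i.
Proof. by rewrite /valid; case: (nupd s) => // m; exact: ltnW. Qed.

Lemma feasible_rly_ge i : valid s i -> i%:R * (d + db) + d <= rly s i.
Proof.
elim: i => [|i IH] vi; first by have [? ? _ _ _] := feas vi; rewrite mul0r add0r; lra.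
have vi' := valid_pred vi.
have [_ _ /(_ vi) rly_src _ _] := feas vi'; have [_ src_rly _ _ _] := feas vi.
by have := IH vi'; rewrite -natr1 mulrDl mul1r; lra.
Qed.

Lemma feasible_arrival_lt i (T : R) :
  valid s i -> rly s i + db <= T -> arrival x i < T.
Proof.
move=> vi rly_T; have [src_ge0 src_rly _ harvested _] := feas vi.
have arrival_le : arrival x i <= src s i.
  case: i vi rly_T src_ge0 src_rly harvested => [|i] _ _ src_ge0 _ harvested.
    by rewrite /arrival big_ord0.
  by apply/ltW/harvested; rewrite leqnn.
apply: (le_lt_trans arrival_le); apply: lt_le_trans rly_T.
apply: (@lt_le_trans _ _ (src s i + d)); first by rewrite ltrDl.
by apply: (le_trans src_rly); rewrite lerDl ltW.
Qed.

Lemma Nrecv_le_nat (T : R) m :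
  (forall i, valid s i -> rly s i + db <= T -> (i < m)%N) ->
  (Nrecv s db T <= (m%:R)%:E)%E.
Proof.
move=> lt_m; apply: ge_ereal_sup => _ [l [ul l_recv] <-]; rewrite lee_fin ler_nat.
rewrite -(size_iota 0 m) uniq_leq_size // => i il.
by have [vi rly_T] := l_recv i il; rewrite mem_iota add0n lt_m.
Qed.

Lemma Nrecv_le_div (T : R) : 0 <= T -> (Nrecv s db T <= (T / (d + db))%:E)%E.
Proof.
move=> T_ge0; have ddb_gt0 : 0 < d + db by rewrite addr_gt0.
apply: le_trans (Nrecv_le_nat (m := Num.truncn (T / (d + db))) _) _.
  move=> i vi rly_T; rewrite truncn_gt_nat ler_pdivlMr //.
  by have := feasible_rly_ge vi; rewrite -natr1 mulrDl mul1r; lra.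
by rewrite lee_fin truncn_le divr_ge0 // ltW.
Qed.

Lemma Nrecv_le_arrival_rate (c T : R) n0 : 0 < c -> 0 <= T ->
  (forall n, (n0 <= n)%N -> c * n%:R <= arrival x n) ->
  (Nrecv s db T <= (n0%:R + T / c + 1)%:E)%E.
Proof.
move=> c_gt0 T_ge0 rate.
apply: le_trans (Nrecv_le_nat (m := (n0 + Num.truncn (T / c)).+1) _) _; last first.
  by rewrite lee_fin -natr1 natrD lerD2r lerD2l truncn_le divr_ge0 // ltW.
move=> i vi rly_T; rewrite ltnS.
have [lt_in0|le_n0i] := ltnP i n0; first by rewrite (leq_trans (ltnW lt_in0)) ?leq_addr.
rewrite (leq_trans _ (leq_addl n0 _)) // truncn_ge_nat; last by rewrite divr_ge0 // ltW.
rewrite ler_pdivlMr // mulrC; apply/ltW/(le_lt_trans (rate i le_n0i)).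
exact: feasible_arrival_lt vi rly_T.
Qed.

Let Nrate (T : R) := (Nrecv s db T * (T^-1)%:E)%E.

Lemma limsup_Nrecv_le_inv : (limf_esup Nrate +oo%R <= ((d + db)^-1)%:E)%E.
Proof.
apply: limf_esup_le_near; near=> T.
have T_gt0 : 0 < T by near: T; exact: nbhs_pinfty_gt (num_real _).
apply: le_trans (lee_wpmul2r _ (Nrecv_le_div (ltW T_gt0))) _.
  by rewrite lee_fin invr_ge0 ltW.
by rewrite -EFinM lee_fin mulrAC mulfV ?gt_eqF ?mul1r.
Unshelve. all: by end_near.
Qed.

Lemma limsup_Nrecv_le1 :
  (forall dl, 0 < dl -> \forall n \near \oo, (1 - dl) * n%:R <= arrival x n) ->
  (limf_esup Nrate +oo%R <= 1%:E)%E.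
Proof.
move=> rates; apply/lee_addgt0Pr => e e_gt0.
have dl_gt0 : 0 < e / (2 + e) by rewrite divr_gt0 // addr_gt0.
have [n0 _ rate] := rates _ dl_gt0.
have c_gt0 : 0 < 1 - e / (2 + e) by rewrite subr_gt0 ltr_pdivrMr ?addr_gt0 //; lra.
have inv_c : (1 - e / (2 + e))^-1 = 1 + e / 2.
  by field; rewrite addrK !gt_eqF ?addr_gt0.
apply: limf_esup_le_near; near=> T.
have T_gt0 : 0 < T by near: T; exact: nbhs_pinfty_gt (num_real _).
have T_large : 2 * (n0%:R + 1) / e < T by near: T; exact: nbhs_pinfty_gt (num_real _).
apply: le_trans (lee_wpmul2r _ (Nrecv_le_arrival_rate c_gt0 (ltW T_gt0) rate)) _.
  by rewrite lee_fin invr_ge0 ltW.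
rewrite -EFinM -EFinD lee_fin inv_c ler_pdivrMr //.
by rewrite ltr_pdivrMr // in T_large; nra.
Unshelve. all: by end_near.
Qed.

End schedule_bounds.

Theorem lemma6 (R : realType) (dm : measure_display) (Omega : measurableType dm)
  (P : probability Omega R) (X Y : nat -> {RV P >-> R}) (d db : R) :
  0 < d -> 0 < db ->
  (forall n, distribution P (X n) = exponential_prob (1 : R)) ->
  (forall n, distribution P (Y n) = exponential_prob (1 : R)) ->
  mutually_independent P
    (fun b : bool * nat => if b.1 then Y b.2 else X b.2) ->
  forall pol : Omega -> schedule R,
    (forall w, feasible (fun n => X n w) (fun n => Y n w) d db (pol w)) ->
    {ae P, forall w,
      (limf_esup (fun T : R => (Nrecv (pol w) db T * (T^-1)%:E)%E) +oo%R
         <= (Num.min 1 (d + db)^-1)%:E)%E}.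
Proof.
move=> d_gt0 db_gt0 X_exp _ indXY pol feas.
have indX : mutually_independent P X.
  have pair_inj : injective (pair false : nat -> bool * nat) by move=> m n [].
  exact: mutually_independent_comp pair_inj indXY.
apply: filterS (ae_arrival_rate_ge X_exp indX) => w rates.
rewrite EFin_min le_min (limsup_Nrecv_le1 d_gt0 db_gt0 (feas w) rates).
exact: limsup_Nrecv_le_inv (feas w).
Qed.
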